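(* Let $1\le M\le N$ and let $\mathbf{B}=[\mathbf{b}_1,\dots,\mathbf{b}_M]$ be a complex $N\times M$ matrix with linearly independent columns and orthogonality defect $$\delta=\frac{\|\mathbf{b}_1\|^2\|\mathbf{b}_2\|^2\cdots\|\mathbf{b}_M\|^2}{\det(\mathbf{B}^{\mathtt{H}}\mathbf{B})}.$$ Let $\mathbf{B}^{-\mathtt{H}}=[\mathbf{a}_1,\dots,\mathbf{a}_M]$ denote the Hermitian of the inverse of $\mathbf{B}$ (of its pseudo-inverse if $M<N$), i.e. $\mathbf{B}^{-\mathtt{H}}=\mathbf{B}(\mathbf{B}^{\mathtt{H}}\mathbf{B})^{-1}$. Then $$\max\{\|\mathbf{b}_1\|,\dots,\|\mathbf{b}_M\|\}\le\frac{\sqrt{\delta}}{\min\{\|\mathbf{a}_1\|,\dots,\|\mathbf{a}_M\|\}}$$ and $$\max\{\|\mathbf{a}_1\|,\dots,\|\mathbf{a}_M\|\}\le\frac{\sqrt{\delta}}{\min\{\|\mathbf{b}_1\|,\dots,\|\mathbf{b}_M\|\}}.$$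
   Context: $(\cdot)^{\mathtt{H}}$ denotes the conjugate transpose, and $\|\cdot\|$ the Euclidean norm on $\mathbb{C}^N$. *)

From HB Require Import structures.
From mathcomp Require Import all_boot all_order all_algebra.
From mathcomp Require Import reals.
From mathcomp.real_closed Require Import complex.
Set Implicit Arguments. Unset Strict Implicit. Unset Printing Implicit Defensive.
Import Order.TTheory GRing.Theory Num.Theory.
Local Open Scope ring_scope.

Definition herm (R : realType) (m n : nat) (A : 'M[R[i]]_(m, n)) : 'M[R[i]]_(n, m) :=
  (map_mx Num.conj A)^T.

Definition vnorm (R : realType) (N : nat) (v : 'cV[R[i]]_N) : R :=
  Num.sqrt (\sum_(i < N) ((complex.Re (v i 0)) ^+ 2 + (complex.Im (v i 0)) ^+ 2)).

(* max of the column norms (norms are >= 0, so 0 is a neutral seed) *)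
Definition colnorm_max (R : realType) (N M : nat) (B : 'M[R[i]]_(N, M)) : R :=
  \big[Num.max/0]_(j < M) vnorm (col j B).

(* min of the column norms (seeded with the max, an element of the set when M >= 1) *)
Definition colnorm_min (R : realType) (N M : nat) (B : 'M[R[i]]_(N, M)) : R :=
  \big[Num.min/colnorm_max B]_(j < M) vnorm (col j B).

(* orthogonality defect: prod ||b_j||^2 / det(B^H B)  (the determinant is real positive;
   we take its real part to divide in R) *)
Definition orth_defect (R : realType) (N M : nat) (B : 'M[R[i]]_(N, M)) : R :=
  (\prod_(j < M) vnorm (col j B) ^+ 2) / complex.Re (\det (herm B *m B)).

Definition dualB (R : realType) (N M : nat) (B : 'M[R[i]]_(N, M)) : 'M[R[i]]_(N, M) :=
  B *m invmx (herm B *m B).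

From HB Require Import structures.
From mathcomp Require Import all_boot all_order all_algebra.
From mathcomp Require Import reals.
From mathcomp.real_closed Require Import complex.
Import Order.TTheory GRing.Theory Num.Theory.
Set Implicit Arguments. Unset Strict Implicit. Unset Printing Implicit Defensive.
Local Open Scope ring_scope.

(** Write G = B^H B.  The columns of B^-H = B G^-1 have Gram matrix G^-1, so
   ||a_j||^2 = (G^-1)_jj = det G_j / det G, where G_j is the Gram matrix of B
   with its j-th column deleted.  By Hadamard's inequality
   det G_j <= prod_(k <> j) ||b_k||^2, hence ||b_j|| ||a_j|| <= sqrt delta for
   every j, and both bounds follow by taking a maximum over one factor and a
   minimum over the other.  Hadamard's inequality is proved by induction on
   the number of columns: replacing the first column c by its residual c'
   after orthogonal projection onto the span of the others is a unimodular
   column operation, after which the Gram matrix is block diagonal, so the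
   Gram determinant is ||c'||^2 <= ||c||^2 times that of the other columns. *)

Definition free_cols (F : pzRingType) m n (A : 'M[F]_(m, n)) :=
  forall x : 'cV_n, A *m x = 0 -> x = 0.

Section FreeColumns.
Variable F : fieldType.

Lemma rank_free_cols m n (A : 'M[F]_(m, n)) : \rank A = n -> free_cols A.
Proof.
move=> rkA x Ax0; have freeAT : row_free A^T by rewrite /row_free mxrank_tr rkA.
by apply: trmx_inj; apply: (row_free_inj freeAT); rewrite /= -trmx_mul Ax0 !trmx0 mul0mx.
Qed.

Lemma free_cols_rsubmx m n1 n2 (A1 : 'M[F]_(m, n1)) (A2 : 'M[F]_(m, n2)) :
  free_cols (row_mx A1 A2) -> free_cols A2.
Proof.
move=> freeA x A2x0; have := freeA (col_mx 0 x).
rewrite mul_row_col mulmx0 add0r A2x0 => /(_ erefl) /eqP.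
by rewrite col_mx_eq0 => /andP[_ /eqP].
Qed.

Lemma free_cols_col' m n (A : 'M[F]_(m, n.+1)) (j : 'I_n.+1) :
  free_cols A -> free_cols (col' j A).
Proof.
move=> freeA x Ax0.
pose y : 'cV_n.+1 := \col_i (if unlift j i is Some k then x k 0 else 0).
have Ay : A *m y = col' j A *m x.
  apply/matrixP => r l; rewrite !mxE (bigD1_ord j) //= mxE unlift_none mulr0 add0r.
  by apply: eq_bigr => k _; rewrite !mxE liftK (ord1 l).
have /matrixP y0 := freeA y (etrans Ay Ax0).
by apply/matrixP => k l; have := y0 (lift j k) l; rewrite !mxE liftK (ord1 l).
Qed.

Lemma free_cols_mulmx_unit m n (A : 'M[F]_(m, n)) (U : 'M[F]_n) :
  free_cols A -> U \in unitmx -> free_cols (A *m U).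
Proof.
move=> freeA unitU x AUx0; have Ux0 : U *m x = 0 by apply: freeA; rewrite mulmxA.
by rewrite -[x](mulKmx unitU) Ux0 mulmx0.
Qed.

Lemma free_cols_col_neq0 m n (A : 'M[F]_(m, n)) (j : 'I_n) :
  free_cols A -> col j A != 0.
Proof.
move=> freeA; apply/eqP => Aj0.
have /matrixP/(_ j 0) := freeA _ (etrans (esym (colE j A)) Aj0).
by rewrite !mxE !eqxx => /eqP; rewrite oner_eq0.
Qed.

Lemma invmx_diag n (G : 'M[F]_n) (j : 'I_n) : G \in unitmx ->
  invmx G j j = \det (row' j (col' j G)) / \det G.
Proof.
by move=> unitG; rewrite /invmx unitG !mxE /cofactor addnn -signr_odd odd_double mul1r mulrC.
Qed.

End FreeColumns.

Lemma bigmax_le_div_bigmin (F : realFieldType) n (f g : 'I_n.+1 -> F) (s : F) :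
  (forall j, 0 <= f j) -> (forall j, 0 < g j) -> (forall j, f j * g j <= s) ->
  \big[Num.max/0]_(j < n.+1) f j
    <= s / \big[Num.min/(\big[Num.max/0]_(j < n.+1) g j)]_(j < n.+1) g j.
Proof.
move=> f_ge0 g_gt0 fg_le; set m := \big[Num.min/_]_(j < n.+1) _.
have m_gt0 : 0 < m.
  apply: lt_bigmin => [|j _]; last exact: g_gt0.
  exact: lt_le_trans (g_gt0 ord0) (le_bigmax _ _ _).
have s_ge0 : 0 <= s := le_trans (mulr_ge0 (f_ge0 ord0) (ltW (g_gt0 ord0))) (fg_le ord0).
apply: bigmax_le => [|j _]; first by rewrite divr_ge0 // ltW.
rewrite ler_pdivlMr //; apply: le_trans _ (fg_le j).
by rewrite ler_wpM2l //; exact: bigmin_le.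
Qed.

Section Gram.
Variable R : realType.
Local Notation C := R[i].
Local Open Scope complex_scope.

Definition gram m n (A : 'M[C]_(m, n)) : 'M[C]_n := herm A *m A.

Lemma hermK m n (A : 'M[C]_(m, n)) : herm (herm A) = A.
Proof. by apply/matrixP => i j; rewrite !mxE conjCK. Qed.

Lemma herm0 m n : herm (0 : 'M[C]_(m, n)) = 0.
Proof. by rewrite /herm map_mx0 trmx0. Qed.

Lemma hermM m n p (A : 'M[C]_(m, n)) (B : 'M[C]_(n, p)) :
  herm (A *m B) = herm B *m herm A.
Proof. by rewrite /herm map_mxM trmx_mul. Qed.

Lemma hermD m n (A B : 'M[C]_(m, n)) : herm (A + B) = herm A + herm B.
Proof. by rewrite /herm map_mxD linearD. Qed.

Lemma herm_row_mx m n1 n2 (A1 : 'M[C]_(m, n1)) (A2 : 'M[C]_(m, n2)) :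
  herm (row_mx A1 A2) = col_mx (herm A1) (herm A2).
Proof. by rewrite /herm map_row_mx tr_row_mx. Qed.

Lemma herm_invmx n (A : 'M[C]_n) : herm (invmx A) = invmx (herm A).
Proof. by rewrite /herm map_invmx trmx_inv. Qed.

Lemma det_herm n (A : 'M[C]_n) : \det (herm A) = Num.conj (\det A).
Proof. by rewrite /herm det_tr det_map_mx. Qed.

Lemma vnorm_ge0 n (v : 'cV[C]_n) : 0 <= vnorm v.
Proof. exact: sqrtr_ge0. Qed.

Lemma sqr_vnorm n (v : 'cV[C]_n) :
  vnorm v ^+ 2 = \sum_(i < n) (complex.Re (v i 0) ^+ 2 + complex.Im (v i 0) ^+ 2).
Proof. by rewrite sqr_sqrtr // sumr_ge0 // => i _; rewrite addr_ge0 ?sqr_ge0. Qed.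

Lemma gram_vnorm n (v : 'cV[C]_n) : gram v 0 0 = (vnorm v ^+ 2)%:C.
Proof.
rewrite sqr_vnorm rmorph_sum !mxE; apply: eq_bigr => i _.
by rewrite !mxE -[RHS]/((_ + _)%:C) add_Re2_Im2 normCK mulrC.
Qed.

Lemma vnorm_gt0 n (v : 'cV[C]_n) : (0 < vnorm v) = (v != 0).
Proof.
rewrite lt_def vnorm_ge0 andbT; congr negb; apply/eqP/eqP => [v0 | ->]; last first.
  by rewrite /vnorm big1 ?sqrtr0 // => i _; rewrite mxE /= expr0n addr0.
have sum0 : \sum_(i < n) (complex.Re (v i 0) ^+ 2 + complex.Im (v i 0) ^+ 2) = 0.
  by rewrite -sqr_vnorm v0 expr0n.
apply/matrixP => i j; rewrite (ord1 j) mxE.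
have /(_ i isT)/(congr1 (real_complex R)) :=
  psumr_eq0P (fun i _ => addr_ge0 (sqr_ge0 _) (sqr_ge0 _)) sum0.
by rewrite add_Re2_Im2 rmorph0 => /eqP; rewrite sqrf_eq0 normr_eq0 => /eqP.
Qed.

Lemma gram_col m n (A : 'M[C]_(m, n)) j : gram (col j A) 0 0 = gram A j j.
Proof. by rewrite !mxE; apply: eq_bigr => k _; rewrite !mxE. Qed.

Lemma gram_mulmx m n p (A : 'M[C]_(m, n)) (U : 'M[C]_(n, p)) :
  gram (A *m U) = herm U *m gram A *m U.
Proof. by rewrite /gram hermM !mulmxA. Qed.

Lemma herm_gram m n (A : 'M[C]_(m, n)) : herm (gram A) = gram A.
Proof. by rewrite /gram hermM hermK. Qed.

Lemma gram_row_mx m n1 n2 (A1 : 'M[C]_(m, n1)) (A2 : 'M[C]_(m, n2)) :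
  gram (row_mx A1 A2) = block_mx (gram A1) (herm A1 *m A2) (herm A2 *m A1) (gram A2).
Proof. by rewrite /gram herm_row_mx mul_col_row. Qed.

Lemma row'_col'_gram m n (A : 'M[C]_(m, n)) j :
  row' j (col' j (gram A)) = gram (col' j A).
Proof. by apply/matrixP => a b; rewrite !mxE; apply: eq_bigr => k _; rewrite !mxE. Qed.

Section Residual.
Variables (N k : nat) (A : 'M[C]_(N, k)).
Hypothesis unit_gramA : gram A \in unitmx.

Definition proj_coef (c : 'cV[C]_N) : 'cV[C]_k := invmx (gram A) *m (herm A *m c).

Definition residual (c : 'cV[C]_N) : 'cV[C]_N := c - A *m proj_coef c.

Lemma herm_mulmx_residual c : herm A *m residual c = 0.
Proof. by rewrite mulmxBr /proj_coef !mulmxA mulmxV // mul1mx subrr. Qed.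

Lemma herm_residual_mulmx c : herm (residual c) *m A = 0.
Proof. by rewrite -[LHS]hermK hermM hermK herm_mulmx_residual herm0. Qed.

Lemma det_gram_row_mx c :
  \det (gram (row_mx c A)) = (vnorm (residual c) ^+ 2)%:C * \det (gram A).
Proof.
pose U : 'M[C]_(1 + k) := block_mx 1 0 (- proj_coef c) 1.
have cAU : row_mx c A *m U = row_mx (residual c) A.
  by rewrite mul_row_block !mulmx1 !mulmx0 add0r mulmxN.
have detU : \det U = 1 by rewrite det_lblock !det1 mulr1.
have -> : \det (gram (row_mx c A)) = \det (gram (row_mx (residual c) A)).
  by rewrite -cAU gram_mulmx !det_mulmx det_herm detU rmorph1 mul1r mulr1.
by rewrite gram_row_mx herm_residual_mulmx det_lblock det_mx11 gram_vnorm.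
Qed.

Lemma vnorm_residual_le c : vnorm (residual c) <= vnorm c.
Proof.
have cE : c = residual c + A *m proj_coef c by rewrite subrK.
move: (residual c) (proj_coef c) cE (herm_mulmx_residual c) (herm_residual_mulmx c).
move=> r x -> Ar0 rA0.
have gramE : gram (r + A *m x) = gram r + gram (A *m x).
  rewrite /gram hermD mulmxDl !mulmxDr mulmxA rA0 mul0mx hermM -mulmxA Ar0 mulmx0.
  by rewrite addr0 add0r.
move: (congr1 (fun G : 'M[C]_1 => G 0 0) gramE).
rewrite [X in _ = X]mxE !gram_vnorm -rmorphD => /complexI pythagoras.
by rewrite -ler_sqr ?nnegrE ?vnorm_ge0 // pythagoras lerDl sqr_ge0.
Qed.

Lemma residual_neq0 c : free_cols (row_mx c A) -> residual c != 0.
Proof.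
move=> freecA; apply/eqP => res0.
have := freecA (col_mx 1 (- proj_coef c)).
rewrite mul_row_col mulmx1 mulmxN => /(_ res0) /eqP.
by rewrite col_mx_eq0 oner_eq0.
Qed.

End Residual.

Lemma hadamard_gram N k (A : 'M[C]_(N, k)) : free_cols A ->
  exists2 r : R, \det (gram A) = r%:C & 0 < r <= \prod_(j < k) vnorm (col j A) ^+ 2.
Proof.
elim: k A => [|k IH] A freeA.
  by exists 1; rewrite ?det_mx00 ?rmorph1 // big_ord0 ltr01 lexx.
have [c [A' eA]] : exists (c : 'cV[C]_N) (A' : 'M[C]_(N, k)), A = row_mx c A'.
  by exists (lsubmx (A : 'M_(N, 1 + k))), (rsubmx (A : 'M_(N, 1 + k))); rewrite hsubmxK.
subst A; have [r detA' /andP[r_gt0 r_le]] := IH A' (@free_cols_rsubmx _ _ 1 _ c _ freeA).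
have unitA' : gram A' \in unitmx by rewrite unitmxE detA' unitfE fmorph_eq0 gt_eqF.
exists (vnorm (residual A' c) ^+ 2 * r).
  by rewrite det_gram_row_mx // detA' -rmorphM.
rewrite mulr_gt0 ?exprn_gt0 ?vnorm_gt0 ?residual_neq0 //=.
rewrite (@big_split_ord _ _ _ 1 k) big_ord1 (colKl (ord0 : 'I_1) c A') col_id.
under eq_bigr => i _ do rewrite (colKr i c A').
rewrite ler_pM ?exprn_ge0 ?vnorm_ge0 ?(ltW r_gt0) //.
by rewrite ler_sqr ?nnegrE ?vnorm_ge0 ?vnorm_residual_le.
Qed.

Lemma unitmx_gram m n (A : 'M[C]_(m, n)) : free_cols A -> gram A \in unitmx.
Proof.
by case/hadamard_gram => r detA /andP[r_gt0 _]; rewrite unitmxE detA unitfE fmorph_eq0 gt_eqF.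
Qed.

Lemma gram_dualB N M (B : 'M[C]_(N, M)) :
  gram B \in unitmx -> gram (dualB B) = invmx (gram B).
Proof.
by move=> unitB; rewrite /dualB gram_mulmx herm_invmx herm_gram mulVmx // mul1mx.
Qed.

Lemma free_cols_dualB N M (B : 'M[C]_(N, M)) : free_cols B -> free_cols (dualB B).
Proof.
move=> freeB; apply: free_cols_mulmx_unit => //.
by rewrite unitmx_inv; exact: unitmx_gram.
Qed.

Lemma vnorm_col_dualB N M (B : 'M[C]_(N, M.+1)) (j : 'I_M.+1) : free_cols B ->
  vnorm (col j B) * vnorm (col j (dualB B)) <= Num.sqrt (orth_defect B).
Proof.
move=> freeB.
have [d detB /andP[d_gt0 _]] := hadamard_gram freeB.
have [r detBj /andP[_ r_le]] := hadamard_gram (free_cols_col' (j := j) freeB).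
have dualE : vnorm (col j (dualB B)) ^+ 2 = r / d.
  apply: (@complexI R); rewrite -gram_vnorm gram_col gram_dualB ?unitmx_gram //.
  by rewrite invmx_diag ?unitmx_gram // row'_col'_gram detB detBj fmorph_div.
have prodE : \prod_(k < M.+1) vnorm (col k B) ^+ 2
    = vnorm (col j B) ^+ 2 * \prod_(k < M) vnorm (col k (col' j B)) ^+ 2.
  rewrite (bigD1_ord j) //=; congr (_ * _); apply: eq_bigr => k _.
  by congr (vnorm _ ^+ 2); apply/matrixP => a b; rewrite !mxE.
have deltaE : orth_defect B
    = vnorm (col j B) ^+ 2 * \prod_(k < M) vnorm (col k (col' j B)) ^+ 2 / d.
  by rewrite /orth_defect detB /= prodE.
rewrite -[_ * _]ger0_norm ?mulr_ge0 ?vnorm_ge0 // -sqrtr_sqr; apply: ler_wsqrtr.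
rewrite exprMn dualE deltaE mulrA; apply: ler_wpM2r; first by rewrite invr_ge0 ltW.
by apply: ler_wpM2l r_le; rewrite exprn_ge0 ?vnorm_ge0.
Qed.

End Gram.

Theorem lemma1 (R : realType) (N M : nat) (hM : (1 <= M)%N) (hMN : (M <= N)%N)
  (B : 'M[R[i]]_(N, M)) (hB : \rank B = M) :
  colnorm_max B <= Num.sqrt (orth_defect B) / colnorm_min (dualB B) /\
  colnorm_max (dualB B) <= Num.sqrt (orth_defect B) / colnorm_min B.
Proof.
(* [M <= N] is implied by [\rank B = M]. *)
case: M hM hMN B hB => // M _ _ B rkB.
have freeB := rank_free_cols rkB.
have col_gt0 A j : free_cols A -> 0 < vnorm (col j A).
  by move=> freeA; rewrite vnorm_gt0 free_cols_col_neq0.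
have freeD := free_cols_dualB freeB.
split; apply: bigmax_le_div_bigmin => j; rewrite ?vnorm_ge0 ?col_gt0 //.
- exact: vnorm_col_dualB.
- by rewrite mulrC; exact: vnorm_col_dualB.
Qed.
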